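(* Let $X$ be a finite nonempty set, $Y$ a nonempty compact metric space, and $u: X\times Y\to\mathbb{R}$ such that $y\mapsto u(x,y)$ is continuous for each $x\in X$. Then for every $\alpha>0$ there exists a bounded measurable function $\hat u: X\times Y\to\mathbb{R}$ such that the game $\hat{\mathcal{G}} = \langle X, Y, \hat u\rangle$ is essentially finite and is an $\alpha$-approximation of $\mathcal{G}=\langle X,Y,u\rangle$, i.e. $|u(x,y)-\hat u(x,y)|\le \alpha$ for all $(x,y)\in X\times Y$.
   Context: A game $\langle X, Y, v\rangle$ is essentially finite if there exist a finite game $\langle \hat X, \hat Y, w\rangle$ (with $\hat X,\hat Y$ finite sets) and measurable maps $f_1: X\to\hat X$, $f_2: Y\to\hat Y$ such that $v(x,y) = w(f_1(x), f_2(y))$ for all $(x,y)\in X\times Y$. A game $\langle X,Y,v'\rangle$ with bounded measurable utility is an $\alpha$-approximation of $\langle X,Y,v\rangle$ if $|v(x,y)-v'(x,y)|\le\alpha$ for all $(x,y)$. *)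

From mathcomp Require Import all_boot all_order all_algebra all_classical all_reals all_analysis.
Import Order.TTheory GRing.Theory Num.Theory numFieldNormedType.Exports.
Local Open Scope classical_set_scope.
Local Open Scope ring_scope.

Set Implicit Arguments.
Unset Strict Implicit.
Unset Printing Implicit Defensive.

Definition borel_set (Y : topologicalType) (A : set Y) : Prop := <<s open >> A.

(* Measurable sets of X * Y, X finite with the discrete sigma-algebra (all sets
   measurable) and Y with its Borel sigma-algebra: the product sigma-algebra,
   generated by the rectangles A `*` B with B Borel. *)
Definition prod_meas_set (X : finType) (Y : topologicalType) (S : set (X * Y)) : Prop :=
  <<s [set A `*` B | A in [set: set X] & B in (@borel_set Y)] >> S.

Definition borel_measurable_fin (Y : topologicalType) (Z : finType) (f : Y -> Z) : Prop :=
  forall B : set Z, borel_set (f @^-1` B).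

Definition prod_measurable_real (R : realType) (X : finType) (Y : topologicalType)
  (v : X * Y -> R) : Prop :=
  forall B : set R, borel_set B -> prod_meas_set (v @^-1` B).

Definition bounded_real_fun (R : realType) (T : Type) (v : T -> R) : Prop :=
  exists M : R, forall t, `|v t| <= M.

(* A game <X, Y, v> is essentially finite (X finite: every map out of X is measurable). *)
Definition essentially_finite (R : realType) (X : finType) (Y : topologicalType)
  (v : X * Y -> R) : Prop :=
  exists (Xh Yh : finType) (w : Xh -> Yh -> R) (f1 : X -> Xh) (f2 : Y -> Yh),
    borel_measurable_fin f2 /\ forall x y, v (x, y) = w (f1 x) (f2 y).

Definition alpha_approximation (R : realType) (T : Type) (alpha : R) (v v' : T -> R) : Prop :=
  forall p, `|v p - v' p| <= alpha.

From mathcomp Require Import all_boot all_order all_algebra all_classical all_reals all_analysis.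
From mathcomp Require Import zify lra.
Import Order.TTheory GRing.Theory Num.Theory numFieldNormedType.Exports.
Local Open Scope classical_set_scope.
Local Open Scope ring_scope.

Set Implicit Arguments.
Unset Strict Implicit.
Unset Printing Implicit Defensive.

(* Replace u by its quantization alpha * floor (u / alpha), which is within alpha of u.
   Each u (x, _) is continuous on the compact Y and X is finite, so u is bounded and the
   integer floor (u (x, y) / alpha) ranges over a finite interval.  Hence the quantized
   game depends on y only through the finite-valued map y |-> (x |-> floor (u (x, y) / alpha)),
   whose fibres are finite intersections of preimages of half-open intervals under
   continuous maps, hence Borel. *)

(* X * Y need not be a pointedType, so the measurableType g_sigma_algebraType G and its
   closure lemmas are not available; we work with <<s G >> on a bare type. *)
Section generated_sigma_algebra_closure.
Variables (T : Type) (G : set (set T)).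

Lemma sigma_algebra_setC (A : set T) : <<s G >> A -> <<s G >> (~` A).
Proof. by move=> GA; rewrite -setTD; exact: sigma_algebraCD. Qed.

Lemma sigma_algebra_setU : setU_closed <<s G >>.
Proof.
move=> A B GA GB; rewrite -bigcup2E.
by apply: sigma_algebra_bigcup => -[|[|i]] //=; exact: sigma_algebra0.
Qed.

Lemma sigma_algebra_setI : setI_closed <<s G >>.
Proof.
move=> A B GA GB; rewrite -[A `&` B]setCK setCI.
by apply: sigma_algebra_setC; apply: sigma_algebra_setU; exact: sigma_algebra_setC.
Qed.

Lemma sigma_algebra_fin_bigcup : fin_bigcup_closed <<s G >>.
Proof.
by apply/fin_bigcup_closedP; split; [exact: sigma_algebra0 | exact: sigma_algebra_setU].
Qed.

Lemma sigma_algebra_fin_bigcap (I : Type) (D : set I) (F : I -> set T) :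
  finite_set D -> (forall i, D i -> <<s G >> (F i)) ->
  <<s G >> (\bigcap_(i in D) F i).
Proof.
move=> finD GF; rewrite -[X in <<s G >> X]setCK setC_bigcap.
apply: sigma_algebra_setC; apply: sigma_algebra_fin_bigcup => // i /GF.
exact: sigma_algebra_setC.
Qed.

Lemma sigma_algebra_preimage_fin (Z : finType) (f : T -> Z) :
  (forall z, <<s G >> (f @^-1` [set z])) -> forall B, <<s G >> (f @^-1` B).
Proof.
move=> Gf B.
have -> : f @^-1` B = \bigcup_(z in B) f @^-1` [set z].
  by apply/seteqP; split=> [t Bft|t [z Bz /= ->]] //; exists (f t).
by apply: sigma_algebra_fin_bigcup => // z _; exact: finite_finset.
Qed.

End generated_sigma_algebra_closure.

Lemma borel_open (Y : topologicalType) (A : set Y) : open A -> borel_set A.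
Proof. exact: sub_sigma_algebra. Qed.

Lemma borel_closed (Y : topologicalType) (A : set Y) : closed A -> borel_set A.
Proof.
by rewrite -openC => /borel_open/sigma_algebra_setC; rewrite setCK.
Qed.

Lemma borel_floor_div_eq (R : realType) (Y : topologicalType) (h : Y -> R)
    (alpha : R) (c : int) :
  0 < alpha -> continuous h -> borel_set [set y | Num.floor (h y / alpha) = c].
Proof.
move=> alpha_gt0 hc.
have -> : [set y | Num.floor (h y / alpha) = c] =
    h @^-1` [set r | c%:~R * alpha <= r] `&` h @^-1` [set r | r < (c + 1)%:~R * alpha].
  apply/seteqP; split=> y /=.
    by move/eqP; rewrite floor_eq ler_pdivlMr // ltr_pdivrMr // => /andP.
  by move=> [? ?]; apply/eqP; rewrite floor_eq ler_pdivlMr // ltr_pdivrMr // ; apply/andP.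
apply: sigma_algebra_setI.
  by apply: borel_closed; apply: closed_comp => [y _|]; [exact: hc | exact: closed_ge].
by apply: borel_open; apply: open_comp => [y _|]; [exact: hc | exact: open_lt].
Qed.

Definition quantize {R : archiFieldType} (alpha r : R) : R :=
  alpha * (Num.floor (r / alpha))%:~R.

Lemma quantize_dist (R : archiFieldType) (alpha r : R) :
  0 < alpha -> `|r - quantize alpha r| < alpha.
Proof.
move=> alpha_gt0; have /andP[] := floor_itv (r / alpha).
rewrite ler_pdivlMr // ltr_pdivrMr // intrD /quantize => lo hi.
rewrite mulrDl mul1r in hi; rewrite mulrC ger0_norm; lra.
Qed.

Lemma quantize_bounded (R : archiFieldType) (alpha M r : R) :
  0 < alpha -> `|r| <= M -> `|quantize alpha r| <= M + alpha.
Proof.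
move=> alpha_gt0 rM; rewrite -(subKr r (quantize alpha r)).
exact: le_trans (ler_normB _ _) (lerD rM (ltW (quantize_dist r alpha_gt0))).
Qed.

Lemma floor_div_itv (R : archiFieldType) (alpha M r : R) :
  0 < alpha -> `|r| <= M ->
  Num.floor (- M / alpha) <= Num.floor (r / alpha) <= Num.floor (M / alpha).
Proof.
move=> alpha_gt0 rM; apply/andP; split; apply: le_floor; rewrite ler_pM2r ?invr_gt0 //.
  by rewrite lerNl; apply: le_trans rM; rewrite -normrN ler_norm.
exact: le_trans (ler_norm r) rM.
Qed.

Lemma int_itv_finite_encoding (lo hi : int) :
  exists n (enc : int -> 'I_n) (dec : 'I_n -> int),
    cancel dec enc /\ {in [pred k | lo <= k <= hi], cancel enc dec}.
Proof.
exists `|hi - lo|.+1, (fun k => inord `|k - lo|), (fun i => lo + i%:Z); split.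
  by move=> i; rewrite addrAC subrr add0r absz_nat inord_val.
move=> k /andP[lo_k k_hi]; rewrite inordK; last by lia.
by rewrite gez0_abs ?subr_ge0 // addrCA subrr addr0.
Qed.

Lemma continuous_compact_fin_bounded (R : realType) (I : finType)
    (Y : topologicalType) (h : I -> Y -> R) :
  compact [set: Y] -> (forall i, continuous (h i)) ->
  exists M, forall i y, `|h i y| <= M.
Proof.
move=> cY hc; suff : \forall M \near +oo, forall i y, `|h i y| <= M by exact: filter_ex.
apply: filter_forall => i.
have [M0 [M0_real hM]] :=
  compact_bounded (continuous_compact (continuous_subspaceT (hc i)) cY).
by exists M0; split=> // M M0_M y; apply: hM => //; exists y.
Qed.

Lemma quantize_fin_factor (R : realType) (X : finType) (Y : topologicalType)
    (u : X -> Y -> R) (alpha M : R) :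
  0 < alpha -> (forall x y, `|u x y| <= M) -> (forall x, continuous (u x)) ->
  exists (Yh : finType) (f : Y -> Yh) (w : X -> Yh -> R),
    borel_measurable_fin f /\ forall x y, w x (f y) = quantize alpha (u x y).
Proof.
move=> alpha_gt0 uM uc; pose q x y := Num.floor (u x y / alpha).
have [n [enc [dec [encK decK]]]] :=
  int_itv_finite_encoding (Num.floor (- M / alpha)) (Num.floor (M / alpha)).
have qK x y : dec (enc (q x y)) = q x y.
  by apply: decK; rewrite inE; exact: floor_div_itv.
exists {ffun X -> 'I_n}, (fun y => [ffun x => enc (q x y)]),
  (fun x (z : {ffun X -> 'I_n}) => alpha * (dec (z x))%:~R).
split=> [z|x y]; last by rewrite ffunE qK.
apply: sigma_algebra_preimage_fin => {}z.
have -> : (fun y => [ffun x => enc (q x y)]) @^-1` [set z] =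
    \bigcap_(x in setT) [set y | q x y = dec (z x)].
  apply/seteqP; split=> y /=; first by move=> <- x _; rewrite ffunE qK.
  by move=> qz; apply/ffunP => x; rewrite ffunE (qz x I) encK.
apply: sigma_algebra_fin_bigcap => [|x _]; first exact: finite_finset.
exact: borel_floor_div_eq.
Qed.

Lemma prod_measurable_fin_factor (R : realType) (X Yh : finType) (Y : topologicalType)
    (f : Y -> Yh) (w : X -> Yh -> R) :
  borel_measurable_fin f -> prod_measurable_real (fun p : X * Y => w p.1 (f p.2)).
Proof.
move=> f_meas B _; pose g (p : X * Y) : X * Yh := (p.1, f p.2).
change (prod_meas_set (g @^-1` [set p | B (w p.1 p.2)])).
apply: sigma_algebra_preimage_fin => -[x z].
apply: sub_sigma_algebra; exists [set x] => //; exists (f @^-1` [set z]) => //.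
by apply/seteqP; split=> -[x' y]; rewrite /g /=; case=> -> ->.
Qed.

Theorem proposition4 (R : realType) (X : finType) (Y : pseudoMetricType R)
  (hX : (0 < #|X|)%N) (y0 : Y) (hT2 : hausdorff_space Y) (hcpt : compact [set: Y])
  (u : X * Y -> R) (hu : forall x : X, continuous (fun y : Y => u (x, y)))
  (alpha : R) (halpha : 0 < alpha) :
  exists uh : X * Y -> R,
    prod_measurable_real uh /\ bounded_real_fun uh /\
    essentially_finite uh /\ alpha_approximation alpha u uh.
Proof.
have [M uM] := continuous_compact_fin_bounded (h := fun x y => u (x, y)) hcpt hu.
have [Yh [f [w [f_meas wE]]]] :=
  quantize_fin_factor (u := fun x y => u (x, y)) halpha uM hu.
exists (fun p => quantize alpha (u p)); split; [|split; [|split]].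
- have -> : (fun p => quantize alpha (u p)) = fun p => w p.1 (f p.2).
    by apply/funext => -[x y]; rewrite wE.
  exact: prod_measurable_fin_factor f_meas.
- by exists (M + alpha) => -[x y]; exact: quantize_bounded.
- by exists X, Yh, w, id, f; split=> // x y; rewrite wE.
- by move=> p; exact/ltW/quantize_dist.
Qed.
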